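(* Let $\tau$ be a non-scalar tame inertial type, $(J,r)$ a maximal refined shape for $\tau$, and $\mathfrak{P}\in\mathrm{Ext}^1_{\mathbb F}(\mathfrak{M},\mathfrak{N})$ an extension of type $\tau$ and refined shape $(J,r)$ (where $(\mathfrak M,\mathfrak N)$ is a pair of rank one modules of refined shape $(J,r)$). Let $D=D(\mathfrak{P})$ be its Dieudonné module. Then for each $i\in\mathbb{Z}/f'\mathbb{Z}$: if $i\in J$ then $F=0$ on $D_{\eta,i-1}$, and if $i\notin J$ then $V=0$ on $D_{\eta,i}$.
   Context: Setup. $p$ odd prime, $K/\mathbb Q_p$ finite with residue field of size $p^f$, ramification index $e$; $L/K$ unramified quadratic; $\pi$ uniformiser of $K$. $\tau=\eta\oplus\eta'$ non-scalar tame inertial type (ordering fixed): principal series ($\eta\ne\eta'$ both extend to $G_K$) or cuspidal ($\eta'=\eta^{p^f}\ne\eta$, $\eta$ extends to $G_L$). $K'=K(\pi^{1/(p^f-1)})$, $f'=f$, or $K'=L(\pi^{1/(p^{2f}-1)})$, $f'=2f$; $k'$ residue field of $K'$; $e'=e(p^{f'}-1)$; $\pi'=\pi^{1/(p^{f'}-1)}$; $E(u)$ its minimal polynomial over $W(k')[1/p]$; $h(g)\in k'$ reduction of $g(\pi')/\pi'$. $\mathbb F$ finite field containing images of $k'$ and of $\bar\eta,\bar\eta'$; $\sigma_i:k'\hookrightarrow\mathbb F$, $\sigma_{i+1}^p=\sigma_i$; $e_i\in k'\otimes\mathbb F$ the idempotents with $(x\otimes1)e_i=(1\otimes\sigma_i(x))e_i$.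 $k_i,k'_i\in\mathbb Z/(p^{f'}-1)$ with $\bar\eta=\sigma_i\circ h^{k_i}$, $\bar\eta'=\sigma_i\circ h^{k'_i}$ on $I(K'/K)$; $[n]$ least non-negative residue mod $p^{f'}-1$. Rank one modules $\mathfrak M(r,a,c)$ over $\mathfrak S_\mathbb F=(k'\otimes\mathbb F)[[u]]$: $e_i\mathfrak M=\mathbb F[[u]]m_i$, $\Phi(1\otimes m_{i-1})=a_iu^{r_i}m_i$, $\hat g(\sum m_i)=\sum h(g)^{c_i}m_i$. A pair $(\mathfrak M(r,a,c),\mathfrak M(s,b,d))$ has type $\tau$ if $\{c_i,d_i\}=\{k_i,k'_i\}$ and $r_i+s_i=e'$; its shape is $J=\{i:c_i=k_i\}$ and refined shape $(J,r)$; $(i-1,i)$ is a transition if exactly one of $i-1,i$ lies in $J$; $(J,r)$ is maximal if $r_i=e'$ at non-transitions and $r_i=e'-[c_i-d_i]$ at transitions. $\mathrm{Ext}^1_{\mathbb F}$ is taken in the category of $\mathfrak S_\mathbb F$-modules with $\varphi$-semilinear endomorphism and commuting semilinear descent data; every such extension $\mathfrak P$ of this pair is a rank two Breuil–Kisin module of height $\le1$ and type $\tau$. Dieudonné module: $D(\mathfrak P)=\mathfrak P/u\mathfrak P$ with the induced $\mathrm{Gal}(K'/K)$-action, $F$ induced by $\varphi_\mathfrak P$, and $V=c^{-1}\mathfrak V \bmod u$, where $E(0)=cp$ and $\mathfrak V$ is the unique map with $\mathfrak V\circ\varphi_{\mathfrak P}=E(u)$. $D_\eta$ is the submodule on which $I(K'/K)$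 acts via $\bar\eta$, and $D_{\eta,i}=e_iD_\eta$; $F$ maps $D_{\eta,i}\to D_{\eta,i+1}$ and $V$ maps $D_{\eta,i+1}\to D_{\eta,i}$. *)

(* Concrete model of rank-two Breuil-Kisin modules with
   (inertial) descent data over S_F = (k' (x) F)[[u]], presented componentwise
   via the idempotents e_i, in a basis adapted to an extension. *)
From mathcomp Require Import all_boot all_algebra.
Set Implicit Arguments.
Unset Strict Implicit.
Unset Printing Implicit Defensive.
Import GRing.Theory.
Local Open Scope ring_scope.

Definition ps (F : fieldType) := nat -> F.

Definition ps_add (F : fieldType) (x y : ps F) : ps F := fun n => x n + y n.
Definition ps_mul (F : fieldType) (x y : ps F) : ps F :=
  fun n => \sum_(k < n.+1) x k * y (n - k)%N.
Definition ps_const (F : fieldType) (a : F) : ps F :=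
  fun n => if n is 0%N then a else 0.
Definition ps_upow (F : fieldType) (m : nat) : ps F :=
  fun n => if n == m then 1 else 0.
(* x(u) |-> x(l u) *)
Definition ps_scal (F : fieldType) (l : F) (x : ps F) : ps F :=
  fun n => l ^+ n * x n.
(* x(u) |-> x(u^p) *)
Definition ps_frob (F : fieldType) (p : nat) (x : ps F) : ps F :=
  fun n => if (n %% p == 0)%N then x (n %/ p)%N else 0.

(* ---------- free rank-two F[[u]]-modules with a fixed basis (n, m) ----------
   a vector is the pair of its coordinates on (n, m). *)
Definition vec (F : fieldType) := (ps F * ps F)%type.

Record mat2 (F : fieldType) := Mat2 { m11 : ps F; m12 : ps F; m21 : ps F; m22 : ps F }.

Definition mapp (F : fieldType) (A : mat2 F) (v : vec F) : vec F :=
  (ps_add (ps_mul (m11 A) v.1) (ps_mul (m12 A) v.2),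
   ps_add (ps_mul (m21 A) v.1) (ps_mul (m22 A) v.2)).

Definition mat_frob (F : fieldType) (p : nat) (A : mat2 F) : mat2 F :=
  Mat2 (ps_frob p (m11 A)) (ps_frob p (m12 A)) (ps_frob p (m21 A)) (ps_frob p (m22 A)).

Definition vscal (F : fieldType) (l : F) (v : vec F) : vec F :=
  (ps_scal l v.1, ps_scal l v.2).
Definition vupow (F : fieldType) (e : nat) (v : vec F) : vec F :=
  (ps_mul (ps_upow F e) v.1, ps_mul (ps_upow F e) v.2).
Definition vconst (F : fieldType) (v : F * F) : vec F := (ps_const v.1, ps_const v.2).
Definition vat0 (F : fieldType) (v : vec F) : F * F := (v.1 0%N, v.2 0%N).

(* least non-negative residue [c - d] modulo q *)
Definition lres_sub (q c d : nat) : nat := ((c + (q - d %% q)) %% q)%N.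

(* ---------- the extension P in Ext^1(M(r,a,c), M(s,b,d)) ----------
   e_i P = F[[u]] n_i (+) F[[u]] m_i, n_i spanning the sub M(s,b,d),
   m_i lifting the basis of the quotient M(r,a,c).
   Phi_i : phi^*(e_{i-1}P) -> e_i P  (matrix w.r.t. 1(x)n_{i-1}, 1(x)m_{i-1}):
     Phi(1(x)n_{i-1}) = b_i u^{s_i} n_i,
     Phi(1(x)m_{i-1}) = a_i u^{r_i} m_i + x_i n_i.
   For g in I(K'/K) with w = h(g) in k'^x, hat g on e_i P is the
   semilinear map (u |-> sigma_i(w) u) with
     hat g(n_i) = sigma_i(w)^{d_i} n_i,
     hat g(m_i) = sigma_i(w)^{c_i} m_i + y_i(w) n_i. *)

Definition Phi_mat (F : fieldType) (f' : nat) (r s : 'I_f' -> nat) (a b : 'I_f' -> F)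
  (x : 'I_f' -> ps F) (i : 'I_f') : mat2 F :=
  Mat2 (ps_mul (ps_const (b i)) (ps_upow F (s i))) (x i)
       (ps_const 0) (ps_mul (ps_const (a i)) (ps_upow F (r i))).

Definition G_mat (F : finFieldType) (k' : finFieldType) (f' : nat)
  (sigma : 'I_f' -> {rmorphism k' -> F}) (c d : 'I_f' -> nat)
  (y : 'I_f' -> k' -> ps F) (i : 'I_f') (w : k') : mat2 F :=
  Mat2 (ps_const (sigma i w ^+ d i)) (y i w)
       (ps_const 0) (ps_const (sigma i w ^+ c i)).

Definition G_act (F : finFieldType) (k' : finFieldType) (f' : nat)
  (sigma : 'I_f' -> {rmorphism k' -> F}) (c d : 'I_f' -> nat)
  (y : 'I_f' -> k' -> ps F) (i : 'I_f') (w : k') (v : vec F) : vec F :=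
  mapp (G_mat sigma c d y i w) (vscal (sigma i w) v).

(* hat g on e_i (phi^* P) = phi^*(e_{i-1} P):  s (x) z |-> g(s) (x) hat g(z) *)
Definition Gphi_act (F : finFieldType) (k' : finFieldType) (p f' : nat)
  (sigma : 'I_f' -> {rmorphism k' -> F}) (c d : 'I_f' -> nat)
  (y : 'I_f' -> k' -> ps F) (i : 'I_f') (w : k') (v : vec F) : vec F :=
  mapp (mat_frob p (G_mat sigma c d y (ord_pred i) w)) (vscal (sigma i w) v).

(* the data (x, y) define an object: descent data is an action of I(K'/K)
   (~ k'^x via h) commuting with Phi. *)
Definition is_extension (F : finFieldType) (k' : finFieldType) (p f' : nat)
  (sigma : 'I_f' -> {rmorphism k' -> F})
  (r s : 'I_f' -> nat) (a b : 'I_f' -> F) (c d : 'I_f' -> nat)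
  (x : 'I_f' -> ps F) (y : 'I_f' -> k' -> ps F) : Prop :=
  [/\ forall i, a i != 0 /\ b i != 0,
      forall i v, G_act sigma c d y i 1 v = v,
      forall i w w' v, w != 0 -> w' != 0 ->
        G_act sigma c d y i w (G_act sigma c d y i w' v) = G_act sigma c d y i (w * w') v
    & forall i w v, w != 0 ->
        mapp (Phi_mat r s a b x i) (Gphi_act p sigma c d y i w v)
        = G_act sigma c d y i w (mapp (Phi_mat r s a b x i) v)].

(* ---------- the Dieudonne module D = P/uP ---------- *)
(* F : D_{i-1} -> D_i *)
Definition D_F (F : fieldType) (f' : nat) (r s : 'I_f' -> nat) (a b : 'I_f' -> F)
  (x : 'I_f' -> ps F) (i : 'I_f') (v : F * F) : F * F :=
  vat0 (mapp (Phi_mat r s a b x i) (vconst v)).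

(* the map frak V_i : e_i P -> phi^*(e_{i-1}P) is given by a matrix W with
   W o Phi_i = E(u) = u^{e'} (E(u) reduces to u^{e'} in S_F);
   V = c^{-1} frak V mod u : D_i -> D_{i-1}, c^{-1} acting on component i
   through sigma_i. *)
Definition is_frakV (F : fieldType) (f' e' : nat) (r s : 'I_f' -> nat) (a b : 'I_f' -> F)
  (x : 'I_f' -> ps F) (i : 'I_f') (W : mat2 F) : Prop :=
  forall v, mapp W (mapp (Phi_mat r s a b x i) v) = vupow e' v.

Definition D_V (F : finFieldType) (k' : finFieldType) (f' : nat)
  (sigma : 'I_f' -> {rmorphism k' -> F}) (cbar : k') (i : 'I_f') (W : mat2 F)
  (v : F * F) : F * F :=
  let l := (sigma i cbar)^-1 in
  let z := vat0 (mapp W (vconst v)) in (l * z.1, l * z.2).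

Definition in_D_eta (F : finFieldType) (k' : finFieldType) (f' : nat)
  (sigma : 'I_f' -> {rmorphism k' -> F}) (c d : 'I_f' -> nat)
  (y : 'I_f' -> k' -> ps F) (etab : k' -> F) (i : 'I_f') (v : F * F) : Prop :=
  forall w : k', w != 0 ->
    vat0 (G_act sigma c d y i w (vconst v)) = (etab w * v.1, etab w * v.2).

(* tau = eta (+) eta' non-scalar: principal series (f' = f) or cuspidal
   (f' = 2f, eta' = eta^{p^f} != eta); etab, etab' are the reductions,
   viewed on I(K'/K) ~ k'^x via h. *)
Definition tame_type (F : finFieldType) (k' : finFieldType) (p f f' : nat)
  (etab etab' : k' -> F) : Prop :=
  (exists2 w : k', w != 0 & etab w != etab' w) /\
  ((f' = f) \/ (f' = (2 * f)%N /\ forall w : k', w != 0 -> etab' w = etab w ^+ (p ^ f))).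

Definition transition (f' : nat) (J : 'I_f' -> bool) (i : 'I_f') : bool :=
  J (ord_pred i) != J i.

Definition maximal_shape (f' e' q : nat) (J : 'I_f' -> bool) (r c d : 'I_f' -> nat) : Prop :=
  forall i, r i = (if transition J i then e' - lres_sub q (c i) (d i) else e')%N.

(* Reduced modulo u, Phi and the descent data act on the basis (n_i, m_i) of
   D_i by upper triangular matrices, inertia acting on the diagonal through
   the characters sigma_i^d_i and sigma_i^c_i.  As r_i > 0 for a maximal shape,
   F takes values in the line spanned by n_i, on which inertia acts through
   eta' when d_i = k'_i; being equivariant, F is then zero on D_{eta,i-1}.
   Dually, when c_i = k'_i the eta-part of D_i is the line spanned by n_i, and
   W Phi = u^e' with Phi n_{i-1} = b_i u^{s_i} n_i and s_i < e' forces the first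
   column of W to vanish modulo u, so V kills that line. *)
From mathcomp Require Import all_boot all_algebra.
From mathcomp Require Import finfield.
Set Implicit Arguments.
Unset Strict Implicit.
Unset Printing Implicit Defensive.
Import GRing.Theory.
Local Open Scope ring_scope.

Lemma eq_mul_neq_eq0 (F : fieldType) (l l' z : F) : l * z = l' * z -> l != l' -> z = 0.
Proof.
move=> /eqP; rewrite -subr_eq0 -mulrBl mulf_eq0 subr_eq0 => /orP[/eqP-> | /eqP //].
by rewrite eqxx.
Qed.

Section PowerSeries.
Variable F : fieldType.
Implicit Types (x y : ps F) (a : F).

Lemma ps_mul0 x y : ps_mul x y 0 = x 0%N * y 0%N.
Proof. by rewrite /ps_mul big_ord1. Qed.

Lemma ps_mul_const_r x a n : ps_mul x (ps_const a) n = x n * a.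
Proof.
rewrite /ps_mul big_ord_recr /= subnn big1 ?add0r // => k _.
have : (0 < n - k)%N by rewrite subn_gt0.
by case: (n - k)%N => // m _; rewrite mulr0.
Qed.

Lemma ps_mul_const_l x a n : ps_mul (ps_const a) x n = a * x n.
Proof. by rewrite /ps_mul big_ord_recl /= subn0 big1 ?addr0 // => k _; rewrite mul0r. Qed.

Lemma ps_mul_coef_low x y n :
  (forall k, (k < n)%N -> y k = 0) -> ps_mul x y n = x 0%N * y n.
Proof.
move=> y_low; rewrite /ps_mul big_ord_recl /= subn0 big1 ?addr0 // => k _.
by rewrite y_low ?mulr0 // ltn_subrL (leq_ltn_trans _ (ltn_ord k)).
Qed.

End PowerSeries.

Section ReductionModU.
Variable F : fieldType.

Definition mapp0 (A : mat2 F) (z : F * F) : F * F :=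
  (m11 A 0%N * z.1 + m12 A 0%N * z.2, m21 A 0%N * z.1 + m22 A 0%N * z.2).

Lemma vat0_mapp (A : mat2 F) (v : vec F) : vat0 (mapp A v) = mapp0 A (vat0 v).
Proof. by rewrite /vat0 /mapp /mapp0 /ps_add /= !ps_mul0. Qed.

Lemma vat0_vscal (l : F) (v : vec F) : vat0 (vscal l v) = vat0 v.
Proof. by rewrite /vat0 /vscal /ps_scal /= !expr0 !mul1r. Qed.

Lemma vat0_vconst (z : F * F) : vat0 (vconst z) = z.
Proof. by case: z. Qed.

Lemma mapp0_frob p (A : mat2 F) z : mapp0 (mat_frob p A) z = mapp0 A z.
Proof. by rewrite /mapp0 /mat_frob /ps_frob /= mod0n div0n. Qed.

Lemma mapp0_scale (A : mat2 F) (l : F) z :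
  mapp0 A (l * z.1, l * z.2) = (l * (mapp0 A z).1, l * (mapp0 A z).2).
Proof. by rewrite /mapp0 /=; congr pair; rewrite mulrDr !(mulrCA l). Qed.

End ReductionModU.

Lemma expf_card_pred (k' : finFieldType) (w : k') : w != 0 -> w ^+ #|k'|.-1 = 1.
Proof.
move=> w_nz; apply: (mulfI w_nz).
by rewrite mulr1 -exprS prednK ?expf_card // (ltnW (finNzRing_gt1 k')).
Qed.

Lemma rmorph_expr_mod (F k' : finFieldType) (rho : {rmorphism k' -> F}) (w : k') m n :
  w != 0 -> m = n %[mod #|k'|.-1] -> rho w ^+ m = rho w ^+ n.
Proof.
move=> w_nz mn; have rho_unity : rho w ^+ #|k'|.-1 = 1.
  by rewrite -rmorphXn expf_card_pred // rmorph1.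
by rewrite -(expr_mod m rho_unity) -(expr_mod n rho_unity) mn.
Qed.

Lemma maximal_shape_r_gt0 (f' e q : nat) (J : 'I_f' -> bool) (r c d : 'I_f' -> nat) i :
  (0 < e)%N -> (0 < q)%N -> maximal_shape (e * q) q J r c d -> (0 < r i)%N.
Proof.
move=> e_gt0 q_gt0 /(_ i)->; case: ifP => _; last by rewrite muln_gt0 e_gt0.
by rewrite subn_gt0 (leq_trans (ltn_pmod _ q_gt0)) ?leq_pmull.
Qed.

Section DieudonneModule.
Variables (F k' : finFieldType) (p f' : nat) (sigma : 'I_f' -> {rmorphism k' -> F}).
Variables (r s c d : 'I_f' -> nat) (a b : 'I_f' -> F).
Variables (x : 'I_f' -> ps F) (y : 'I_f' -> k' -> ps F) (etab : k' -> F).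

Lemma vat0_G_act i w v :
  vat0 (G_act sigma c d y i w v) = mapp0 (G_mat sigma c d y i w) (vat0 v).
Proof. by rewrite /G_act vat0_mapp vat0_vscal. Qed.

Lemma vat0_Gphi_act i w v :
  vat0 (Gphi_act p sigma c d y i w v) = mapp0 (G_mat sigma c d y (ord_pred i) w) (vat0 v).
Proof. by rewrite /Gphi_act vat0_mapp vat0_vscal mapp0_frob. Qed.

Lemma D_eta_snd_eq0 i z w : in_D_eta sigma c d y etab i z ->
  w != 0 -> sigma i w ^+ c i != etab w -> z.2 = 0.
Proof.
move=> z_eta w_nz c_ne; apply: eq_mul_neq_eq0 c_ne.
by have := congr1 snd (z_eta w w_nz); rewrite vat0_G_act vat0_vconst /mapp0 /= mul0r add0r.
Qed.

Lemma D_eta_fst_eq0 i z w : in_D_eta sigma c d y etab i z -> z.2 = 0 ->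
  w != 0 -> sigma i w ^+ d i != etab w -> z.1 = 0.
Proof.
move=> z_eta z2 w_nz d_ne; apply: eq_mul_neq_eq0 d_ne.
by have := congr1 fst (z_eta w w_nz); rewrite vat0_G_act vat0_vconst /mapp0 /= z2 mulr0 addr0.
Qed.

Lemma D_F_D_eta i v : is_extension p sigma r s a b c d x y ->
  in_D_eta sigma c d y etab (ord_pred i) v ->
  in_D_eta sigma c d y etab i (D_F r s a b x i v).
Proof.
case=> _ _ _ Phi_equiv v_eta w w_nz.
have Gv := v_eta w w_nz; rewrite vat0_G_act vat0_vconst in Gv.
have := congr1 (@vat0 F) (Phi_equiv i w (vconst v) w_nz).
rewrite vat0_mapp vat0_Gphi_act vat0_vconst Gv mapp0_scale vat0_G_act vat0_mapp.
by rewrite vat0_G_act !vat0_vconst /D_F vat0_mapp vat0_vconst => ->.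
Qed.

Lemma D_F_snd_eq0 i v : (0 < r i)%N -> (D_F r s a b x i v).2 = 0.
Proof.
move=> r_gt0; rewrite /D_F vat0_mapp vat0_vconst /mapp0 /= !ps_mul0 /ps_upow.
by rewrite eq_sym (negbTE (lt0n_neq0 r_gt0)) !(mulr0, mul0r, addr0).
Qed.

Lemma D_F_eq0_on_D_eta i v : is_extension p sigma r s a b c d x y -> (0 < r i)%N ->
  (exists2 w, w != 0 & sigma i w ^+ d i != etab w) ->
  in_D_eta sigma c d y etab (ord_pred i) v -> D_F r s a b x i v = (0, 0).
Proof.
move=> ext r_gt0 [w w_nz d_ne] v_eta.
have z2 := D_F_snd_eq0 v r_gt0.
have z1 := D_eta_fst_eq0 (D_F_D_eta ext v_eta) z2 w_nz d_ne.
by move: z1 z2; case: (D_F _ _ _ _ _ _ _) => ? ? /= -> ->.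
Qed.

Lemma Phi_first_column_fst i n :
  (mapp (Phi_mat r s a b x i) (vconst (1, 0))).1 n = if n == s i then b i else 0.
Proof.
rewrite /mapp /ps_add /= !ps_mul_const_r ps_mul_const_l /ps_upow mulr0 addr0 mulr1.
by case: eqP; rewrite ?mulr1 ?mulr0.
Qed.

Lemma Phi_first_column_snd i n : (mapp (Phi_mat r s a b x i) (vconst (1, 0))).2 n = 0.
Proof. by rewrite /mapp /ps_add /= !ps_mul_const_r mulr0 addr0 mulr1; case: n. Qed.

Lemma frakV_first_column_eq0 e' i W : b i != 0 -> (s i < e')%N ->
  is_frakV e' r s a b x i W -> m11 W 0%N = 0 /\ m21 W 0%N = 0.
Proof.
move=> b_nz s_lt /(_ (vconst (1, 0))).
move: (Phi_first_column_fst i) (Phi_first_column_snd i).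
move: (mapp (Phi_mat r s a b x i) (vconst (1, 0))) => P P1 P2 WP.
have coef_s (A B : ps F) : ps_mul A P.1 (s i) + ps_mul B P.2 (s i) = A 0%N * b i.
  rewrite !ps_mul_coef_low => [|k _|k k_lt]; last by rewrite P1 ltn_eqF.
  - by rewrite P1 P2 eqxx mulr0 addr0.
  - exact: P2.
have upow_s (z : F) : ps_mul (ps_upow F e') (ps_const z) (s i) = 0.
  by rewrite ps_mul_const_r /ps_upow ltn_eqF // mul0r.
have := congr1 (fun u => u.1 (s i)) WP; have := congr1 (fun u => u.2 (s i)) WP.
rewrite /mapp /ps_add /= !coef_s !upow_s => /eqP + /eqP.
by rewrite !mulf_eq0 (negbTE b_nz) !orbF => /eqP-> /eqP->.
Qed.

Lemma D_V_eq0_on_D_eta e' (cbar : k') i W v : b i != 0 -> (s i < e')%N ->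
  (exists2 w, w != 0 & sigma i w ^+ c i != etab w) ->
  is_frakV e' r s a b x i W -> in_D_eta sigma c d y etab i v ->
  D_V sigma cbar i W v = (0, 0).
Proof.
move=> b_nz s_lt [w w_nz c_ne] W_frakV v_eta.
have [W11 W21] := frakV_first_column_eq0 b_nz s_lt W_frakV.
have v2 := D_eta_snd_eq0 v_eta w_nz c_ne.
by rewrite /D_V vat0_mapp vat0_vconst /mapp0 W11 W21 v2 /= !(mul0r, mulr0, addr0).
Qed.

End DieudonneModule.

Theorem lemma5p4p1
  (p f f' e : nat) (F k' : finFieldType)
  (sigma : 'I_f' -> {rmorphism k' -> F}) (cbar : k')
  (etab etab' : k' -> F) (kk kk' : 'I_f' -> nat)
  (r s c d : 'I_f' -> nat) (a b : 'I_f' -> F)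
  (x : 'I_f' -> ps F) (y : 'I_f' -> k' -> ps F) :
  prime p -> odd p -> (0 < f)%N -> (0 < e)%N ->
  #|k'| = (p ^ f')%N ->
  (forall (i : 'I_f') (z : k'), sigma (ordS i) z ^+ p = sigma i z) ->
  tame_type p f f' etab etab' ->
  (forall (i : 'I_f') (w : k'), w != 0 -> etab w = sigma i w ^+ kk i) ->
  (forall (i : 'I_f') (w : k'), w != 0 -> etab' w = sigma i w ^+ kk' i) ->
  cbar != 0 ->
  (* the pair (M(r,a,c), M(s,b,d)) has type tau *)
  (forall i : 'I_f',
     ((c i = kk i %[mod p ^ f' - 1] /\ d i = kk' i %[mod p ^ f' - 1]) \/
      (c i = kk' i %[mod p ^ f' - 1] /\ d i = kk i %[mod p ^ f' - 1])) /\
     (r i + s i = e * (p ^ f' - 1))%N) ->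
  (* its refined shape (J, r), J = {i : c_i = k_i}, is maximal *)
  maximal_shape (e * (p ^ f' - 1)) (p ^ f' - 1)
    (fun i => c i == kk i %[mod p ^ f' - 1]) r c d ->
  (* P is an extension of M(r,a,c) by M(s,b,d) *)
  is_extension p sigma r s a b c d x y ->
  forall i : 'I_f',
    ((c i == kk i %[mod p ^ f' - 1]) ->
       forall v : F * F, in_D_eta sigma c d y etab (ord_pred i) v ->
         D_F r s a b x i v = (0, 0)) /\
    (~~ (c i == kk i %[mod p ^ f' - 1]) ->
       forall W : mat2 F, is_frakV (e * (p ^ f' - 1)) r s a b x i W ->
       forall v : F * F, in_D_eta sigma c d y etab i v ->
         D_V sigma cbar i W v = (0, 0)).
Proof.
move=> _ _ _ e_gt0 card_k' _ [[w0 w0_nz eta_ne] _] eta_exp eta'_exp _ htype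
  r_maximal ext i.
set q := (p ^ f' - 1)%N.
have q_k' : #|k'|.-1 = q by rewrite card_k' /q subn1.
have q_gt0 : (0 < q)%N by rewrite /q subn_gt0 -card_k' finNzRing_gt1.
have r_gt0 : (0 < r i)%N := maximal_shape_r_gt0 i e_gt0 q_gt0 r_maximal.
have [type_i rs_i] := htype i.
have s_lt : (s i < e * q)%N by rewrite -rs_i -{1}[s i]add0n ltn_add2r.
have [ab_nz _ _ _] := ext.
have eta_mod m w : w != 0 -> m = kk i %[mod q] -> sigma i w ^+ m = etab w.
  by rewrite -q_k' => w_nz /(rmorph_expr_mod (sigma i) w_nz)->; rewrite (eta_exp i).
have not_eta m : m = kk' i %[mod q] -> exists2 w, w != 0 & sigma i w ^+ m != etab w.
  rewrite -q_k' => /(rmorph_expr_mod (sigma i) w0_nz) m_kk'; exists w0 => //.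
  by rewrite m_kk' -(eta'_exp i) // eq_sym.
case: type_i => [[c_kk d_kk'] | [c_kk' d_kk]].
- split=> [_ v | /negP[]]; last exact/eqP.
  exact: D_F_eq0_on_D_eta ext r_gt0 (not_eta _ d_kk').
- split=> [/eqP c_kk | _ W W_frakV v]; last first.
    exact: D_V_eq0_on_D_eta (ab_nz i).2 s_lt (not_eta _ c_kk') W_frakV.
  by have [w w_nz] := not_eta _ c_kk'; rewrite eta_mod ?eqxx.
Qed.
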